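(* Let $\{l,f_1,\dots,f_M\}$ be a set of generators of $H_2(\mathbb{CP}^2\# M\overline{\mathbb{CP}}^2;\mathbb Z)$, pairwise orthogonal for the intersection form, with $l$ the class of a complex line in $\mathbb{CP}^2$ and $f_i\cdot f_i=-1$. Let $\alpha_1,\dots,\alpha_k$, $k\ge2$, be classes of the form $\alpha_1=l-e^1_1-e^1_2-\dots-e^1_{b_1}$ and $\alpha_i=e^i_1-e^i_2-\dots-e^i_{b_i}$ for $i=2,\dots,k$, where $b_i\ge1$, each $e^i_j\in\{f_1,\dots,f_M\}$, and $e^i_j\ne e^i_{j'}$ for $j\ne j'$. Suppose $\alpha_i\cdot\alpha_j=1$ if $|i-j|=1$ and $\alpha_i\cdot\alpha_j=0$ if $|i-j|>1$. Let $A^1=\{e^1_1,\dots,e^1_{b_1}\}$ and $A^i=\{e^i_2,\dots,e^i_{b_i}\}$ for $i=2,\dots,k$. Then: (1) for every $j=2,\dots,k$ there is an index $i$ with $1\le i<j$ such that $e^j_1\in A^i$; moreover, if $e^j_1\in A^i$ with $i<j-1$, then $e^h_1\in A^i\cap A^j$ for some index $h$ with $i<h<j$; (2) for every $1\le i<j\le k$, $A^i\cap A^j\subseteq\{e^2_1,\dots,e^k_1\}$. *)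

From HB Require Import structures.
From mathcomp Require Import all_boot all_order all_algebra.
Set Implicit Arguments. Unset Strict Implicit. Unset Printing Implicit Defensive.
Import Order.TTheory GRing.Theory Num.Theory.
Local Open Scope ring_scope.

(* H_2(CP^2 # M \bar{CP}^2; Z) = Z^{1+M}, written in the orthogonal basis
   {l, f_1, ..., f_M}: a class is its coefficient function on [option 'I_M],
   with [None] the coordinate of l and [Some m] the coordinate of f_(m+1). *)
Definition cls (M : nat) := option 'I_M -> int.

Definition l_cls (M : nat) : cls M := fun c => if c is None then 1 else 0.
Definition f_cls (M : nat) (m : 'I_M) : cls M :=
  fun c => if c == Some m then 1 else 0.
Definition add_cls M (a b : cls M) : cls M := fun c => a c + b c.
Definition sub_cls M (a b : cls M) : cls M := fun c => a c - b c.
Definition sum_f M (s : seq 'I_M) : cls M := fun c => \sum_(x <- s) f_cls x c.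

Definition iform M (a b : cls M) : int :=
  a None * b None - \sum_(m : 'I_M) a (Some m) * b (Some m).

(* Data: for each index i (1-based), e1 i = e^i_1 and rest i = [e^i_2; ...; e^i_{b_i}]
   (so b_i = 1 + size (rest i) >= 1). *)
Definition alpha M (e1 : nat -> 'I_M) (rest : nat -> seq 'I_M) (i : nat) : cls M :=
  if i == 1%N then sub_cls (@l_cls M) (sum_f (e1 1%N :: rest 1%N))
  else sub_cls (f_cls (e1 i)) (sum_f (rest i)).

Definition Aset M (e1 : nat -> 'I_M) (rest : nat -> seq 'I_M) (i : nat) : seq 'I_M :=
  if i == 1%N then e1 1%N :: rest 1%N else rest i.

(* Write c_x(i) for minus the coefficient of f_x in alpha_i, so that c_x(i) is
   1 on A^i, -1 at e^i_1 (i >= 2) and 0 elsewhere, and the intersection numbers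
   read sum_x c_x(i) c_x(j) = -[j = i + 1] for i < j.  The partial sums
   P_n(x) = c_x(1) + ... + c_x(n) stay in {0, 1}: pairing alpha_(n+1) with
   alpha_1 + ... + alpha_n gives sum_x c_x(n+1) P_n(x) = -1, in which only the
   term at x = e^(n+1)_1 can be negative, so P_n(e^(n+1)_1) = 1 and all other
   terms vanish.  P_(j-1)(e^j_1) = 1 yields (1a).  If x lies in A^i and A^j with
   i < j, then P_j(x) <= 1 forces some c_x(h) < 0 with i < h < j, i.e. x = e^h_1,
   which is (2).  For (1b), alpha_i . alpha_j = 0 with e^j_1 in A^i produces a
   second common element of A^i and A^j, to which (2) applies. *)
From mathcomp Require Import all_boot all_order all_algebra.
From mathcomp Require Import zify lra.
Import Order.TTheory GRing.Theory Num.Theory.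
Set Implicit Arguments. Unset Strict Implicit.
Local Open Scope ring_scope.

Lemma sum_gt0_witness (R : realDomainType) (I : eqType) (r : seq I) (P : pred I)
    (F : I -> R) :
  0 < \sum_(i <- r | P i) F i -> exists2 i, (i \in r) && P i & 0 < F i.
Proof.
have [/hasP[i ir /andP[Pi Fi]] _ | /hasPn noF] :=
  boolP (has (fun i => P i && (0 < F i)) r).
  by exists i; rewrite ?ir.
rewrite big_seq_cond ltNge sumr_le0 // => i /andP[ir Pi].
by have := noF i ir; rewrite Pi /= -leNgt.
Qed.

Lemma sum_lt0_witness (R : realDomainType) (I : eqType) (r : seq I) (P : pred I)
    (F : I -> R) :
  \sum_(i <- r | P i) F i < 0 -> exists2 i, (i \in r) && P i & F i < 0.
Proof.
rewrite -oppr_gt0 -sumrN => /sum_gt0_witness[i iPr Fi].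
by exists i; rewrite // -oppr_gt0.
Qed.

Lemma sum_mul_eqN1 (R : realDomainType) (T : finType) (y : T) (a b : T -> R) :
    a y = -1 -> (forall z, z != y -> 0 <= a z) -> (forall z, 0 <= b z <= 1) ->
  \sum_z a z * b z = -1 -> b y = 1 /\ forall z, z != y -> a z * b z = 0.
Proof.
move=> ay a_ge0 b01; rewrite (bigD1 y) //= ay mulN1r.
have ab_ge0 z : z != y -> 0 <= a z * b z.
  by move=> zy; rewrite mulr_ge0 ?a_ge0 //; case/andP: (b01 z).
have S_ge0 : 0 <= \sum_(z | z != y) a z * b z by apply: sumr_ge0.
have /andP[_ by_le1] := b01 y.
move=> sum_eq; have by1 : b y = 1 by lra.
split=> //; apply/psumr_eq0P => //; lra.
Qed.

Lemma sum_f_None M (s : seq 'I_M) : sum_f s None = 0.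
Proof. by rewrite /sum_f big1. Qed.

Lemma sum_f_Some M (s : seq 'I_M) x : sum_f s (Some x) = (count_mem x s)%:R.
Proof.
rewrite /sum_f; elim: s => [|y s IHs]; first by rewrite big_nil.
by rewrite big_cons IHs /= natrD /f_cls (inj_eq (@Some_inj _)) eq_sym; case: eqP.
Qed.

Section Coefficients.
Variables (M : nat) (e1 : nat -> 'I_M) (rest : nat -> seq 'I_M).

Definition coef (x : 'I_M) (i : nat) : int :=
  (x \in Aset e1 rest i)%:R - ((i != 1%N) && (e1 i == x))%:R.

Lemma coef1 x : coef x 1 = (x \in Aset e1 rest 1)%:R.
Proof. by rewrite /coef eqxx subr0. Qed.

Lemma coef_neq x i : x != e1 i -> coef x i = (x \in Aset e1 rest i)%:R.
Proof. by rewrite /coef eq_sym andbC => /negbTE ->; rewrite subr0. Qed.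

Lemma coef_e1 i : i != 1%N -> uniq (e1 i :: rest i) -> coef (e1 i) i = -1.
Proof.
move=> i_neq1 /andP[e1_notin _].
by rewrite /coef i_neq1 eqxx /Aset (negbTE i_neq1) (negbTE e1_notin) sub0r.
Qed.

Lemma coef_mem x i : uniq (e1 i :: rest i) -> x \in Aset e1 rest i -> coef x i = 1.
Proof.
move=> uniq_i xA; have [x_e1 | x_neq] := eqVneq x (e1 i); last by rewrite coef_neq ?xA.
have [i1 | i_neq1] := eqVneq i 1%N; first by rewrite /coef xA i1.
by move: xA uniq_i; rewrite x_e1 /Aset (negbTE i_neq1) /= => ->.
Qed.

Lemma coef_gt0 x i : 0 < coef x i -> x \in Aset e1 rest i.
Proof. by rewrite /coef; case: (x \in _); case: (_ && _). Qed.

Lemma coef_lt0 x i : coef x i < 0 -> e1 i = x.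
Proof. by rewrite /coef; case: (x \in _); case: (e1 i =P x) => //; rewrite andbF. Qed.

Lemma alpha_None i : alpha e1 rest i None = (i == 1%N)%:R.
Proof. by rewrite /alpha; case: eqP; rewrite /sub_cls sum_f_None subr0. Qed.

Lemma alpha_Some i x : uniq (e1 i :: rest i) -> alpha e1 rest i (Some x) = - coef x i.
Proof.
move=> uniq_i; rewrite /alpha /coef /Aset.
have [i1 | i_neq1] := eqVneq i 1%N.
  by rewrite /sub_cls sum_f_Some count_uniq_mem -?i1 //= subr0 sub0r.
rewrite /sub_cls sum_f_Some count_uniq_mem; last by case/andP: uniq_i.
by rewrite /f_cls (inj_eq (@Some_inj _)) eq_sym opprB; case: eqP.
Qed.

Lemma iform_alpha i j : i != j -> uniq (e1 i :: rest i) -> uniq (e1 j :: rest j) ->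
  iform (alpha e1 rest i) (alpha e1 rest j) = - \sum_x coef x i * coef x j.
Proof.
move=> i_neq_j uniq_i uniq_j; rewrite /iform !alpha_None.
have -> : (i == 1%N)%:R * (j == 1%N)%:R = 0 :> int.
  by case: eqP => [i1|]; rewrite ?mul0r // -i1 eq_sym (negbTE i_neq_j) mulr0.
by rewrite sub0r; congr (- _); apply: eq_bigr => x _; rewrite !alpha_Some ?mulrNN.
Qed.

End Coefficients.

Section Chain.
Variables (M k : nat) (e1 : nat -> 'I_M) (rest : nat -> seq 'I_M).
Hypothesis huniq : forall i, (1 <= i <= k)%N -> uniq (e1 i :: rest i).
Hypothesis hadj : forall i j, (1 <= i <= k)%N -> (1 <= j <= k)%N ->
  (i.+1 == j)%N || (j.+1 == i)%N -> iform (alpha e1 rest i) (alpha e1 rest j) = 1.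
Hypothesis hfar : forall i j, (1 <= i <= k)%N -> (1 <= j <= k)%N ->
  (i.+1 < j)%N || (j.+1 < i)%N -> iform (alpha e1 rest i) (alpha e1 rest j) = 0.

Local Notation c := (coef e1 rest).
Local Notation A := (Aset e1 rest).

Lemma coef_dot_adj i : (1 <= i < k)%N -> \sum_x c x i * c x i.+1 = -1.
Proof.
move=> i_range; apply: oppr_inj; rewrite -iform_alpha ?huniq ?neq_ltn ?ltnSn //; try lia.
by rewrite hadj ?eqxx //; lia.
Qed.

Lemma coef_dot_far i j : (1 <= i)%N -> (i.+1 < j <= k)%N -> \sum_x c x i * c x j = 0.
Proof.
move=> i_ge1 j_range; apply: oppr_inj; rewrite -iform_alpha ?huniq ?neq_ltn; try lia.
by rewrite hfar //; lia.
Qed.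

Definition coef_psum n x := \sum_(1 <= m < n.+1) c x m.

Lemma coef_psum_dot n : (1 <= n < k)%N -> \sum_x c x n.+1 * coef_psum n x = -1.
Proof.
move=> n_range; have n_ge1 : (1 <= n)%N by case/andP: n_range.
rewrite /coef_psum; under eq_bigr do rewrite mulrC mulr_suml.
rewrite exchange_big big_nat_recr //= coef_dot_adj // big_nat_cond big1 ?add0r //.
by move=> m /andP[/andP[m_ge1 m_lt_n] _]; apply: coef_dot_far; lia.
Qed.

Lemma coef_psum_step n : (1 <= n < k)%N -> (forall x, 0 <= coef_psum n x <= 1) ->
  coef_psum n (e1 n.+1) = 1 /\ forall x, 0 <= coef_psum n.+1 x <= 1.
Proof.
move=> n_range P01.
have uniq_n1 : uniq (e1 n.+1 :: rest n.+1) by apply: huniq; lia.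
have c_ge0 z : z != e1 n.+1 -> 0 <= c z n.+1 by move/coef_neq ->; rewrite ler0n.
have n1_neq1 : n.+1 != 1%N by lia.
have [P_e1 P_others] :=
  sum_mul_eqN1 (coef_e1 n1_neq1 uniq_n1) c_ge0 P01 (coef_psum_dot n_range).
split=> // x; rewrite /coef_psum big_nat_recr //= -/(coef_psum n x).
have [-> | x_neq] := eqVneq x (e1 n.+1); first by rewrite P_e1 coef_e1 ?subrr.
have := P_others x x_neq; have := P01 x; rewrite coef_neq //.
by case: (x \in _); rewrite ?mul1r ?mul0r ?addr0 // => _ ->.
Qed.

Lemma coef_psum_bounded n : (n <= k)%N -> forall x, 0 <= coef_psum n x <= 1.
Proof.
elim: n => [|[|n] IHn] n_le_k x; first by rewrite /coef_psum big_geq.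
  by rewrite /coef_psum big_nat1 coef1; case: (_ \in _).
by apply: (coef_psum_step _ (IHn _)).2; lia.
Qed.

Lemma coef_psum_e1 j : (2 <= j <= k)%N -> coef_psum j.-1 (e1 j) = 1.
Proof.
case: j => [|j] j_range //.
by apply: (coef_psum_step _ (coef_psum_bounded _)).1; lia.
Qed.

Lemma shared_elem_is_e1 i j x : (1 <= i)%N -> (i < j <= k)%N ->
  x \in A i -> x \in A j -> exists2 h, (i < h < j)%N & e1 h = x.
Proof.
move=> i_ge1 /andP[i_lt_j j_le_k] x_in_i x_in_j.
have P_j := coef_psum_bounded j_le_k x.
have P_i1 : 0 <= coef_psum i.-1 x <= 1 by apply: coef_psum_bounded; lia.
have split_j : coef_psum j x =
    coef_psum i.-1 x + c x i + \sum_(i.+1 <= m < j) c x m + c x j.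
  rewrite /coef_psum (prednK i_ge1) big_nat_recr 1?(@big_cat_nat _ _ _ i.+1) //; try lia.
  by rewrite big_nat_recr.
have /sum_lt0_witness[m] : \sum_(i.+1 <= m < j) c x m < 0.
  by move: P_j P_i1; rewrite split_j !coef_mem ?huniq //; lia.
by rewrite mem_index_iota andbT => m_range /coef_lt0; exists m.
Qed.

Lemma shared_elem_of_far_e1 i j : (1 <= i)%N -> (i.+1 < j <= k)%N ->
  e1 j \in A i -> exists2 x, x \in A i & x \in A j.
Proof.
move=> i_ge1 j_range e1_in_i.
have uniq_j : uniq (e1 j :: rest j) by apply: huniq; lia.
have := coef_dot_far i_ge1 j_range.
rewrite (bigD1 (e1 j)) //= coef_mem ?coef_e1 ?huniq //; try lia.
rewrite mul1r => /eqP; rewrite addrC subr_eq0 => /eqP rest_sum.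
have /sum_gt0_witness[x /andP[_ x_neq]] : 0 < \sum_(x | x != e1 j) c x i * c x j.
  by rewrite rest_sum.
rewrite (coef_neq rest x_neq); case x_in_j: (x \in A j); last by rewrite mulr0 ltxx.
by rewrite mulr1 => /coef_gt0 x_in_i; exists x.
Qed.

End Chain.

Theorem lemma4p3 (M k : nat) (e1 : nat -> 'I_M) (rest : nat -> seq 'I_M)
  (hk : (2 <= k)%N)
  (huniq : forall i, (1 <= i <= k)%N -> uniq (e1 i :: rest i))
  (hadj : forall i j, (1 <= i <= k)%N -> (1 <= j <= k)%N ->
            (i.+1 == j)%N || (j.+1 == i)%N ->
            iform (alpha e1 rest i) (alpha e1 rest j) = 1)
  (hfar : forall i j, (1 <= i <= k)%N -> (1 <= j <= k)%N ->
            (i.+1 < j)%N || (j.+1 < i)%N ->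
            iform (alpha e1 rest i) (alpha e1 rest j) = 0) :
  (* (1) *)
  (forall j, (2 <= j <= k)%N ->
     exists i, (1 <= i < j)%N /\ e1 j \in Aset e1 rest i) /\
  (forall i j, (2 <= j <= k)%N -> (1 <= i)%N -> (i < j.-1)%N ->
     e1 j \in Aset e1 rest i ->
     exists h, (i < h < j)%N /\ e1 h \in Aset e1 rest i /\ e1 h \in Aset e1 rest j) /\
  (* (2) *)
  (forall i j, (1 <= i)%N -> (i < j)%N -> (j <= k)%N ->
     forall x, x \in Aset e1 rest i -> x \in Aset e1 rest j ->
     exists h, (2 <= h <= k)%N /\ x = e1 h).
Proof.
have shared := shared_elem_is_e1 huniq hadj hfar.
split; [|split].
- move=> j j_range.
  have /sum_gt0_witness[i] : 0 < coef_psum e1 rest j.-1 (e1 j).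
    by rewrite (coef_psum_e1 huniq hadj hfar).
  rewrite mem_index_iota andbT prednK; last by lia.
  by move=> i_range /coef_gt0 e1_in_i; exists i.
- move=> i j j_range i_ge1 i_lt e1_in_i.
  have [|x x_in_i x_in_j] := shared_elem_of_far_e1 huniq hfar i_ge1 _ e1_in_i.
    by lia.
  have [|h h_range e1h_x] := shared i j x i_ge1 _ x_in_i x_in_j; first by lia.
  by exists h; rewrite e1h_x.
- move=> i j i_ge1 i_lt_j j_le_k x x_in_i x_in_j.
  have [|h h_range <-] := shared i j x i_ge1 _ x_in_i x_in_j; first by lia.
  by exists h; split => //; lia.
Qed.
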